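(* Let $f : \{0, 1\}^n \to \{0, 1\}$ be a Boolean function. Then $\mathsf{Pat}^{\mathsf{M}}(f) \geq \mathrm{spar}(f)$.
   Context: Every $f:\{0,1\}^n\to\{0,1\}$ has a unique M\''obius expansion $f=\sum_{S\subseteq[n]}\widetilde f(S)\mathsf{AND}_S$ with real coefficients, where $\mathsf{AND}_S(x)=\prod_{i\in S}x_i$; its M\''obius support is $\mathcal{S}_f=\{S:\widetilde f(S)\ne0\}$ and its M\''obius sparsity is $\mathrm{spar}(f)=|\mathcal S_f|$. The pattern of $x$ is $(\mathsf{AND}_S(x))_{S\in\mathcal S_f}$, and $\mathsf{Pat}^{\mathsf{M}}(f)$ is the number of distinct patterns over all $x\in\{0,1\}^n$. *)

From mathcomp Require Import all_boot all_order all_algebra.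
Set Implicit Arguments. Unset Strict Implicit. Unset Printing Implicit Defensive.
Import GRing.Theory Num.Theory.
Local Open Scope ring_scope.

Definition cube (n : nat) := {ffun 'I_n -> bool}.

Definition AND (n : nat) (S : {set 'I_n}) (x : cube n) : bool :=
  [forall i in S, x i].

Definition is_mobius_expansion (R : nzRingType) (n : nat) (f : cube n -> bool)
    (c : {set 'I_n} -> R) : Prop :=
  forall x : cube n, ((f x)%:R : R) = \sum_(S : {set 'I_n}) c S * ((AND S x)%:R).

Definition mob_support (R : nzRingType) (n : nat) (c : {set 'I_n} -> R) :
    {set {set 'I_n}} := [set S | c S != 0].

Definition spar (R : nzRingType) (n : nat) (c : {set 'I_n} -> R) : nat :=
  #|mob_support c|.

(* pattern of x: the vector (AND_S x)_{S in support}; encoded as a finite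
   function on all sets, forced to false outside the support. *)
Definition pattern (R : nzRingType) (n : nat) (c : {set 'I_n} -> R) (x : cube n) :
    {ffun {set 'I_n} -> bool} :=
  [ffun S => (S \in mob_support c) && AND S x].

Definition PatM (R : nzRingType) (n : nat) (c : {set 'I_n} -> R) : nat :=
  #|[set pattern c x | x : cube n]|.

(** The pattern of the indicator vector 1_S of a set S has a 1 exactly at the
    support sets contained in S. Two support sets S, S' with the same pattern
    at 1_S, 1_S' therefore satisfy S ⊆ S' and S' ⊆ S, so S ↦ pattern(1_S) is
    injective on the Möbius support and there are at least spar(f) patterns. *)

From mathcomp Require Import all_boot all_order all_algebra.

Set Implicit Arguments.
Unset Strict Implicit.
Unset Printing Implicit Defensive.

Definition cube_of_set (n : nat) (S : {set 'I_n}) : cube n := [ffun i => i \in S].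

Lemma AND_cube_of_set (n : nat) (T S : {set 'I_n}) :
  AND T (cube_of_set S) = (T \subset S).
Proof.
apply/forallP/subsetP => [T_sub i iT | T_sub i].
- by have := T_sub i; rewrite iT ffunE.
- by apply/implyP => /T_sub; rewrite ffunE.
Qed.

Section PatternsOfIndicators.

Variables (R : nzRingType) (n : nat) (c : {set 'I_n} -> R).

Lemma pattern_cube_of_set (S T : {set 'I_n}) :
  pattern c (cube_of_set S) T = (T \in mob_support c) && (T \subset S).
Proof. by rewrite ffunE AND_cube_of_set. Qed.

Lemma pattern_cube_of_set_inj :
  {in mob_support c &, injective (fun S => pattern c (cube_of_set S))}.
Proof.
move=> S S' suppS suppS' eq_pat.
have sub_SS' : S \subset S'.
  by have := pattern_cube_of_set S' S; rewrite -eq_pat pattern_cube_of_set suppS subxx.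
have sub_S'S : S' \subset S.
  by have := pattern_cube_of_set S S'; rewrite eq_pat pattern_cube_of_set suppS' subxx.
by apply/eqP; rewrite eqEsubset sub_SS' sub_S'S.
Qed.

Lemma spar_le_PatM : spar c <= PatM c.
Proof.
rewrite /spar /PatM -(card_in_imset pattern_cube_of_set_inj).
apply/subset_leq_card/subsetP => _ /imsetP [S _ ->].
exact: imset_f.
Qed.

End PatternsOfIndicators.

Theorem claim4p2 (R : realFieldType) (n : nat) (f : {ffun 'I_n -> bool} -> bool)
    (c : {set 'I_n} -> R) :
  is_mobius_expansion f c -> spar c <= PatM c.
Proof.
(* The bound holds for any coefficient function c, expansion of f or not. *)
by move=> _; apply: spar_le_PatM.
Qed.
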